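(* Let $X : \mathcal{U}_i$, let $Y : X \to X \to \mathcal{U}_j$, and let $f : \prod_{x, x' : X} (x = x') \to Y(x, x')$. Then the map $f\,x\,x' : (x = x') \to Y(x,x')$ is an equivalence for all $x, x' : X$ if and only if there exists a map \[ g : \prod_{x, x' : X} Y(x,x') \to (x = x') \] such that for all $x, x' : X$ and all $y : Y(x,x')$ we have $f(g(y)) = y$ (the first two arguments of $f$ and $g$ being left implicit).
   Context: We work in intensional Martin-Löf type theory with dependent sums, dependent products, intensional identity types $=$, and a cumulative hierarchy of universes $\mathcal{U}_0 : \mathcal{U}_1 : \cdots$. A type $A$ is contractible if $\mathit{isContr}(A) \triangleq \sum_{a_0 : A}\prod_{a : A}(a_0 = a)$ is inhabited. For $f : A \to B$ and $b : B$, the fiber is $\mathit{fib}_f(b) \triangleq \sum_{a : A}(f\,a = b)$, and $f$ is an equivalence if $\mathit{isEquiv}(f) \triangleq \prod_{b : B}\mathit{isContr}(\mathit{fib}_f(b))$ is inhabited; $A \simeq B \triangleq \sum_{f : A \to B}\mathit{isEquiv}(f)$. *)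

(* We use a Type-valued identity type [paths]
   (MLTT intensional identity type), Type-valued Sigma [sigT], and Type-valued
   logical connectives (pairs of functions) so nothing is truncated to Prop. *)
Set Universe Polymorphism.

Inductive paths {A : Type} (a : A) : A -> Type :=
  idpath : paths a a.
Arguments idpath {A a}.

Notation "x == y" := (paths x y) (at level 70, no associativity) : type_scope.

Definition isContr (A : Type) : Type :=
  { a0 : A & forall a : A, a0 == a }.

Definition fib {A B : Type} (f : A -> B) (b : B) : Type :=
  { a : A & f a == b }.

Definition isEquiv {A B : Type} (f : A -> B) : Type :=
  forall b : B, isContr (fib f b).

Definition Equiv (A B : Type) : Type := { f : A -> B & isEquiv f }.

Definition iffT (A B : Type) : Type := ((A -> B) * (B -> A))%type.

(* Fundamental theorem of identity types: for fixed [x], the maps [f x x']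
   are all equivalences as soon as the total space [{x' & Y x x'}] is
   contractible.  A section [g] exhibits that total space as a retract of the
   contractible based path space [{x' & x == x'}], and the fibre of [f x x']
   over [y] is in turn a retract of a path space of the total space. *)

Definition inverse {A : Type} {a b : A} (p : a == b) : b == a :=
  match p with idpath => idpath end.

Definition concat {A : Type} {a b c : A} (p : a == b) (q : b == c) : a == c :=
  match q with idpath => p end.

Definition ap {A B : Type} (h : A -> B) {a b : A} (p : a == b) : h a == h b :=
  match p with idpath => idpath end.

Lemma concat_Vp {A : Type} {a b : A} (p : a == b) : concat (inverse p) p == idpath.
Proof. destruct p. exact idpath. Defined.

Lemma isContr_retract {A B : Type} (r : A -> B) (s : B -> A) :
  (forall b, r (s b) == b) -> isContr A -> isContr B.
Proof.
  intros rs [a0 contr_a0]. exists (r a0). intro b.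
  exact (concat (ap r (contr_a0 (s b))) (rs b)).
Defined.

Lemma isContr_paths {A : Type} : isContr A -> forall a b : A, isContr (a == b).
Proof.
  intros [a0 contr_a0] a b. exists (concat (inverse (contr_a0 a)) (contr_a0 b)).
  intro p. destruct p. apply concat_Vp.
Defined.

Lemma isContr_based_paths {A : Type} (a0 : A) : isContr { a : A & a0 == a }.
Proof.
  exists (existT _ a0 idpath). intros [a p]. destruct p. exact idpath.
Defined.

Section FundamentalTheorem.
Variables (A : Type) (a0 : A) (P : A -> Type) (f : forall a, a0 == a -> P a).

Definition total_path_of_fib (a : A) (y : P a) (u : fib (f a) y) :
  existT P a0 (f a0 idpath) == existT P a y.
Proof. destruct u as [p q]. destruct q. destruct p. exact idpath. Defined.

Definition fib_of_total_path (w : sigT P) (e : existT P a0 (f a0 idpath) == w) :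
  fib (f (projT1 w)) (projT2 w).
Proof. destruct e. exact (existT _ idpath idpath). Defined.

Lemma fib_of_total_pathK (a : A) (y : P a) (u : fib (f a) y) :
  fib_of_total_path (existT P a y) (total_path_of_fib a y u) == u.
Proof. destruct u as [p q]. destruct q. destruct p. exact idpath. Defined.

Lemma isEquiv_of_isContr_total : isContr (sigT P) -> forall a, isEquiv (f a).
Proof.
  intros contr_total a y.
  apply (isContr_retract (fib_of_total_path (existT P a y))
                         (total_path_of_fib a y)).
  - apply fib_of_total_pathK.
  - apply isContr_paths, contr_total.
Defined.

Lemma isContr_total_of_section (g : forall a, P a -> a0 == a) :
  (forall a (y : P a), f a (g a y) == y) -> isContr (sigT P).
Proof.
  intro fg.
  apply (isContr_retract (fun w => existT P (projT1 w) (f _ (projT2 w)))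
                         (fun w => existT (paths a0) (projT1 w) (g _ (projT2 w)))).
  - intros [a y]. exact (ap (existT P a) (fg a y)).
  - apply isContr_based_paths.
Defined.

End FundamentalTheorem.

Theorem mainTheorem1 (X : Type) (Y : X -> X -> Type)
  (f : forall x x' : X, x == x' -> Y x x') :
  iffT (forall x x' : X, isEquiv (f x x'))
       { g : forall x x' : X, Y x x' -> x == x' &
         forall (x x' : X) (y : Y x x'), f x x' (g x x' y) == y }.
Proof.
  split.
  - intro equiv_f.
    exists (fun x x' y => projT1 (projT1 (equiv_f x x' y))).
    intros x x' y. exact (projT2 (projT1 (equiv_f x x' y))).
  - intros [g fg] x.
    apply isEquiv_of_isContr_total.
    exact (isContr_total_of_section X x (Y x) (f x) (g x) (fg x)).
Qed.
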